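(* Let $x,y$ be non-commuting indeterminates and $C=xyx^{-1}y^{-1}$. Let $(R_n)_{n\in\mathbb Z}$ be the solution of $$R_{n+1}CR_{n-1}=R_n^2+1\qquad(n\in\mathbb Z)$$ with $R_0=yxy^{-1}$ and $R_1=y$. Then the element $$K_n:=R_{n+1}^{-1}R_n+R_{n+1}^{-1}R_n^{-1}+R_{n+1}R_n^{-1}$$ is independent of $n\in\mathbb Z$.
   Context: Work in the free skew field (non-commutative rational functions) over $\mathbb C$ generated by $x,y$. *)

From HB Require Import structures.
From mathcomp Require Import all_boot all_order all_algebra.
From mathcomp Require Import complex.
From mathcomp Require Import Rstruct.
From Stdlib Require Import Reals.
Set Implicit Arguments. Unset Strict Implicit. Unset Printing Implicit Defensive.
Import Order.TTheory GRing.Theory Num.Theory.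
Local Open Scope ring_scope.

Definition CC : Type := complex Rdefinitions.R.
HB.instance Definition _ := GRing.Field.on CC.

Definition is_divring (D : unitRingType) : Prop :=
  forall d : D, d != 0 -> d \is a GRing.unit.

Inductive rexpr : Type :=
| RX | RY | RC of CC
| RAdd of rexpr & rexpr | RMul of rexpr & rexpr
| RNeg of rexpr | RInv of rexpr.

Fixpoint reval (D : unitAlgType CC) (a b : D) (e : rexpr) : option D :=
  match e with
  | RX => Some a
  | RY => Some b
  | RC c => Some (c%:A)
  | RAdd e1 e2 =>
      match reval a b e1, reval a b e2 with
      | Some u, Some v => Some (u + v) | _, _ => None end
  | RMul e1 e2 =>
      match reval a b e1, reval a b e2 with
      | Some u, Some v => Some (u * v) | _, _ => None end
  | RNeg e1 => match reval a b e1 with Some u => Some (- u) | None => None end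
  | RInv e1 =>
      match reval a b e1 with
      | Some u => if u \is a GRing.unit then Some u^-1 else None
      | None => None end
  end.

(* (K, x, y) is the free skew field over CC generated by x, y
   (Cohn's universal field of fractions of CC<x,y>), characterized by:
   - K is a division CC-algebra generated (as a division ring over CC) by x, y;
   - a rational expression is defined at (x, y) as soon as it is defined at
     some point of some division CC-algebra;
   - a rational expression vanishing at (x, y) vanishes at every point of
     every division CC-algebra where it is defined. *)
Definition free_skew_field (K : unitAlgType CC) (x y : K) : Prop :=
  [/\ is_divring K,
      forall k : K, exists e, reval x y e = Some k,
      forall e, (exists (D : unitAlgType CC) (a b : D),
                   is_divring D /\ reval a b e <> None) ->
                reval x y e <> None
    & forall e, reval x y e = Some 0 ->
      forall (D : unitAlgType CC) (a b : D), is_divring D ->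
      forall v, reval a b e = Some v -> v = 0].

Definition Kinv (K : unitRingType) (R : int -> K) (n : int) : K :=
  (R (n + 1))^-1 * R n + (R (n + 1))^-1 * (R n)^-1 + R (n + 1) * (R n)^-1.

From HB Require Import structures.
From mathcomp Require Import all_boot all_order all_algebra complex Rstruct.
Set Implicit Arguments. Unset Strict Implicit. Unset Printing Implicit Defensive.
Import Order.TTheory GRing.Theory Num.Theory.
Local Open Scope ring_scope.

(* Every R_n is a rational expression in x and y which, specialised at
   x = y = 1 (so C = 1), evaluates to a positive real; hence it is nonzero,
   thus invertible, in the free skew field.  With all R_n invertible, the
   recurrence at n + 1 makes the exchange relation R_{n+1} C R_n = R_n R_{n+1}
   equivalent at n and at n + 1, and it holds at n = 0 by the choice of R_0
   and R_1.  The exchange relations at n and n + 1 together with the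
   recurrence are exactly what is needed to rewrite K_{n+1} into K_n. *)

Lemma int_ind_succ_pred (P : int -> Prop) :
  P 0 -> (forall n, P n -> P (n + 1)) -> (forall n, P n -> P (n - 1)) ->
  forall n, P n.
Proof.
move=> P0 PS PP; elim/int_ind => // m Pm.
  by rewrite -addn1 PoszD; apply: PS.
by rewrite -addn1 PoszD opprD; apply: PP.
Qed.

Lemma int_ind2_succ_pred (P : int -> Prop) :
  P 0 -> P 1 ->
  (forall n, P (n - 1) -> P n -> P (n + 1)) ->
  (forall n, P n -> P (n + 1) -> P (n - 1)) ->
  forall n, P n.
Proof.
move=> P0 P1 PS PP n; suff [] : P n /\ P (n + 1) by [].
elim/int_ind_succ_pred: n => [|n [Pn Pn1]|n [Pn Pn1]]; first by [].
  by split=> //; apply: PS => //; rewrite addrK.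
by split; [apply: PP | rewrite subrK].
Qed.

Section ExchangeRelation.
Variables (K : unitRingType) (a b c C : K).
Hypotheses (ua : a \is a GRing.unit) (ub : b \is a GRing.unit).
Hypothesis uc : c \is a GRing.unit.
Hypothesis recurrence : c * C * a = b ^+ 2 + 1.

Let sqr1_commb : (b ^+ 2 + 1) * b = b * (b ^+ 2 + 1).
Proof. by rewrite mulrDl mulrDr -exprSr -exprS mul1r mulr1. Qed.

(* Both sides are equivalent to [b ^+ 2 + 1 = b * c / b * a], using that
   [b] commutes with [b ^+ 2 + 1]. *)
Lemma exchange_relation_succ :
  (b * C * a == a * b) = (c * C * b == b * c).
Proof.
have ucb : c / b \is a GRing.unit by rewrite unitrMl ?unitrV.
have uba : b^-1 * a \is a GRing.unit by rewrite unitrMl ?unitrV.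
have ubV : b^-1 \is a GRing.unit by rewrite unitrV.
rewrite -(inj_eq (mulrI ucb)) [in RHS]eq_sym -[in RHS](inj_eq (mulIr uba)).
have -> : c / b * (b * C * a) = b ^+ 2 + 1 by rewrite -recurrence !mulrA divrK.
have -> : c * C * b * (b^-1 * a) = b ^+ 2 + 1 by rewrite -recurrence !mulrA mulrK.
rewrite -[in RHS](inj_eq (mulrI ubV)) -[in RHS](inj_eq (mulIr ub)).
rewrite -[b^-1 * (b ^+ 2 + 1) * b]mulrA sqr1_commb mulKr //.
by rewrite eq_sym !mulrA mulVr // mul1r.
Qed.

Lemma Kinv_shift : b * C * a = a * b -> c * C * b = b * c ->
  c^-1 * b + c^-1 * b^-1 + c * b^-1 = b^-1 * a + b^-1 * a^-1 + b * a^-1.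
Proof.
move=> Jab Jbc.
have sumL : c^-1 * b + c^-1 * b^-1 = c^-1 * (b ^+ 2 + 1) * b^-1.
  by rewrite mulrDr mulrDl expr2 mulr1 !mulrA mulrK.
have sumR : b^-1 * a^-1 + b * a^-1 = b^-1 * (b ^+ 2 + 1) * a^-1.
  by rewrite mulrDr mulrDl expr2 mulr1 mulKr // addrC.
have Ca : c^-1 * (b ^+ 2 + 1) = C * a by rewrite -recurrence -!mulrA mulKr.
have cC : (b ^+ 2 + 1) * a^-1 = c * C by rewrite -recurrence mulrK.
have Cab : C * a * b^-1 = b^-1 * a.
  by rewrite -(mulKr ub (C * a)) [b * _]mulrA Jab -mulrA mulrK.
have bcC : b^-1 * (c * C) = c * b^-1.
  by rewrite -(mulrK ub (c * C)) Jbc -mulrA mulKr.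
by rewrite sumL -addrA sumR Ca Cab -mulrA cC bcC.
Qed.
End ExchangeRelation.

Section RecurrenceSolutions.
Variables (K : unitRingType) (C : K) (R : int -> K).
Hypothesis recurrence : forall n, R (n + 1) * C * R (n - 1) = R n ^+ 2 + 1.

Section ClosedPredicate.
Variable P : K -> Prop.
Hypotheses (P_unit : forall k, P k -> k \is a GRing.unit) (P1 : P 1).
Hypothesis P_add : forall u v, P u -> P v -> P (u + v).
Hypothesis P_mul : forall u v, P u -> P v -> P (u * v).
Hypothesis P_inv : forall u, P u -> P u^-1.

Lemma recurrence_closed : P C -> P (R 0) -> P (R 1) -> forall n, P (R n).
Proof.
move=> PC PR0 PR1; have uC := P_unit PC.
have P_sqr1 k : P k -> P (k ^+ 2 + 1) by move=> Pk; rewrite expr2; auto.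
apply: int_ind2_succ_pred => // n PRp PRn.
  have uRp := P_unit PRp.
  by rewrite -(mulrK uC (R (n + 1))) -(mulrK uRp (_ * C)) (recurrence n); auto.
have uRs := P_unit PRn.
rewrite -(mulKr uC (R (n - 1))) -(mulKr uRs (C * _)) [R (n + 1) * _]mulrA.
by rewrite (recurrence n); auto.
Qed.
End ClosedPredicate.

Hypothesis unitR : forall n, R n \is a GRing.unit.

Lemma exchange_relation_all : R 1 * C * R 0 = R 0 * R 1 ->
  forall n, R (n + 1) * C * R n = R n * R (n + 1).
Proof.
move=> J0; elim/int_ind_succ_pred => [|n Jn|n Jn]; first by rewrite add0r.
  have rec := recurrence (n + 1); rewrite addrK in rec.
  by apply/eqP; rewrite -(exchange_relation_succ (unitR _) (unitR _) (unitR _) rec); apply/eqP.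
rewrite subrK; apply/eqP.
by rewrite (exchange_relation_succ (unitR _) (unitR _) (unitR _) (recurrence n)); apply/eqP.
Qed.

Lemma Kinv_constant : R 1 * C * R 0 = R 0 * R 1 -> forall n, Kinv R n = Kinv R 0.
Proof.
move=> J0; have J := exchange_relation_all J0.
have Kinv_succ n : Kinv R (n + 1) = Kinv R n.
  have rec := recurrence (n + 1); rewrite addrK in rec.
  exact: (Kinv_shift (unitR _) (unitR _) (unitR _) rec (J n) (J (n + 1))).
elim/int_ind_succ_pred => [//|n Kn|n Kn]; first by rewrite Kinv_succ.
by rewrite -Kn -{2}(subrK 1 n) Kinv_succ.
Qed.
End RecurrenceSolutions.

Lemma field_is_divring (F : fieldType) : is_divring F.
Proof. by move=> d; rewrite unitfE. Qed.

Section PositiveAtOne.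
Variables (K : unitAlgType CC) (x y : K).

Definition positive_at_one (k : K) : Prop :=
  exists2 e, reval x y e = Some k &
  exists2 v : CC^o, reval (1 : CC^o) 1 e = Some v & 0 < (v : Rdefinitions.R[i]).

Lemma positive_at_one_x : positive_at_one x.
Proof. by exists RX => //; exists 1. Qed.

Lemma positive_at_one_y : positive_at_one y.
Proof. by exists RY => //; exists 1. Qed.

Lemma positive_at_one_1 : positive_at_one 1.
Proof. by exists (RC 1); rewrite /= scale1r //; exists 1; rewrite /= ?scale1r. Qed.

Lemma positive_at_one_add u v :
  positive_at_one u -> positive_at_one v -> positive_at_one (u + v).
Proof.
move=> [e eu [s es s_gt0]] [f fv [t ft t_gt0]].
by exists (RAdd e f); rewrite /= ?eu ?fv //; exists (s + t); rewrite /= ?es ?ft ?addr_gt0.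
Qed.

Lemma positive_at_one_mul u v :
  positive_at_one u -> positive_at_one v -> positive_at_one (u * v).
Proof.
move=> [e eu [s es s_gt0]] [f fv [t ft t_gt0]].
by exists (RMul e f); rewrite /= ?eu ?fv //; exists (s * t); rewrite /= ?es ?ft ?mulr_gt0.
Qed.

Lemma positive_at_one_inv u : u \is a GRing.unit ->
  positive_at_one u -> positive_at_one u^-1.
Proof.
move=> uu [e eu [s es s_gt0]]; exists (RInv e); first by rewrite /= eu uu.
have us : s \is a GRing.unit by rewrite unitfE lt0r_neq0.
by exists s^-1; rewrite /= ?es ?us ?invr_gt0.
Qed.

Hypothesis free : free_skew_field x y.

Lemma positive_at_one_unit k : positive_at_one k -> k \is a GRing.unit.
Proof.
case: free => divK _ _ zero_everywhere [e ek [s es s_gt0]].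
apply: divK; apply: contraTneq s_gt0 => k0.
rewrite (zero_everywhere e _ CC^o 1 1 (@field_is_divring CC) _ es) ?ltxx //.
by rewrite ek k0.
Qed.
End PositiveAtOne.

Theorem lemma3p1 (K : unitAlgType CC) (x y : K) (Hfree : free_skew_field x y)
  (R : int -> K)
  (HR0 : R 0 = y * x * y^-1) (HR1 : R 1 = y)
  (Hrec : forall n : int,
      R (n + 1) * (x * y * x^-1 * y^-1) * R (n - 1) = R n ^+ 2 + 1) :
  forall n : int, Kinv R n = Kinv R 0.
Proof.
set C := x * y * x^-1 * y^-1 in Hrec.
have P_unit := positive_at_one_unit Hfree.
have P_inv u : positive_at_one x y u -> positive_at_one x y u^-1.
  by move=> Pu; apply: positive_at_one_inv (P_unit _ Pu) Pu.
have [Px Py] := (positive_at_one_x x y, positive_at_one_y x y).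
have [ux uy] := (P_unit _ Px, P_unit _ Py).
have PC : positive_at_one x y C by rewrite /C; auto using positive_at_one_mul.
have PR0 : positive_at_one x y (R 0) by rewrite HR0; auto using positive_at_one_mul.
have PR1 : positive_at_one x y (R 1) by rewrite HR1.
have PR := recurrence_closed Hrec P_unit (positive_at_one_1 x y)
  (@positive_at_one_add _ x y) (@positive_at_one_mul _ x y) P_inv PC PR0 PR1.
apply: (Kinv_constant Hrec (fun n => P_unit _ (PR n))).
by rewrite HR0 HR1 /C !mulrA !divrK // mulrK.
Qed.
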